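(* Let $\Sigma$ be a shift space, $Y$ an irreducible shift of finite type, and $\phi : \Sigma \to Y$ a right closing constant-to-one code. Then $\Sigma$ is a nonwandering shift of finite type.
   Context: Shift spaces are closed shift-invariant subsets of $\mathcal{A}^{\mathbb{Z}}$; a code is a continuous shift-commuting map; constant-to-one: all fibers finite of cardinality independent of $y \in Y$. Irreducible: for all words $u,v$ there is $w$ with $uwv$ a word. Nonwandering: for every word $u$ there is $w$ with $uwu$ a word. Right closing: $\phi$ never identifies two distinct left asymptotic points, where $x,\bar x$ are left asymptotic if $d(\sigma^{-n}x,\sigma^{-n}\bar x)\to0$, $d(x,\bar x)=2^{-k}$ with $k$ maximal such that $x_{[-k,k]}=\bar x_{[-k,k]}$. *)

From Stdlib Require Import ZArith List.
Import ListNotations.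
Open Scope Z_scope.

Definition FiniteAlphabet (A : Type) : Prop := exists l : list A, forall a, In a l.

Definition point (A : Type) := Z -> A.

Definition shift {A : Type} (x : point A) : point A := fun i => x (i + 1).
Definition shift_inv {A : Type} (x : point A) : point A := fun i => x (i - 1).

Definition shift_inv_n {A : Type} (n : nat) (x : point A) : point A :=
  fun i => x (i - Z.of_nat n).

(* x and y agree on the central block [-k,k]; i.e. d(x,y) <= 2^{-k}. *)
Definition agree {A : Type} (k : nat) (x y : point A) : Prop :=
  forall i, - Z.of_nat k <= i <= Z.of_nat k -> x i = y i.

Definition eqp {A : Type} (x y : point A) : Prop := forall i, x i = y i.

Definition closed_set {A : Type} (X : point A -> Prop) : Prop :=
  forall x, (forall k, exists y, X y /\ agree k x y) -> X x.

Definition shift_invariant {A : Type} (X : point A -> Prop) : Prop :=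
  (forall x, X x -> X (shift x)) /\ (forall x, X x -> X (shift_inv x)).

Definition shift_space {A : Type} (X : point A -> Prop) : Prop :=
  FiniteAlphabet A /\ closed_set X /\ shift_invariant X.

Definition occurs_at {A : Type} (w : list A) (x : point A) (i : Z) : Prop :=
  forall (j : nat) (a : A), nth_error w j = Some a -> x (i + Z.of_nat j) = a.

Definition is_word {A : Type} (X : point A -> Prop) (w : list A) : Prop :=
  exists x i, X x /\ occurs_at w x i.

Definition SFT {A : Type} (X : point A -> Prop) : Prop :=
  shift_space X /\
  exists F : list (list A),
    forall x, X x <-> (forall w, In w F -> forall i, ~ occurs_at w x i).

Definition irreducible {A : Type} (X : point A -> Prop) : Prop :=
  forall u v, is_word X u -> is_word X v -> exists w, is_word X (u ++ w ++ v).

Definition nonwandering {A : Type} (X : point A -> Prop) : Prop :=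
  forall u, is_word X u -> exists w, is_word X (u ++ w ++ u).

Definition code {A B : Type} (Sigma : point A -> Prop) (Y : point B -> Prop)
    (phi : point A -> point B) : Prop :=
  (forall x, Sigma x -> Y (phi x)) /\
  (forall x, Sigma x -> forall k : nat, exists m : nat,
      forall y, Sigma y -> agree m x y -> agree k (phi x) (phi y)) /\
  (forall x, Sigma x -> eqp (phi (shift x)) (shift (phi x))).

Definition fiber_card {A B : Type} (Sigma : point A -> Prop)
    (phi : point A -> point B) (y : point B) (n : nat) : Prop :=
  exists l : list (point A),
    length l = n /\
    (forall x, In x l -> Sigma x /\ eqp (phi x) y) /\
    (forall x, Sigma x -> eqp (phi x) y -> exists x', In x' l /\ eqp x x') /\
    (forall (i j : nat) x1 x2, nth_error l i = Some x1 -> nth_error l j = Some x2 ->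
        eqp x1 x2 -> i = j).

Definition constant_to_one {A B : Type} (Sigma : point A -> Prop)
    (Y : point B -> Prop) (phi : point A -> point B) : Prop :=
  exists n : nat, forall y, Y y -> fiber_card Sigma phi y n.

Definition left_asymptotic {A : Type} (x x' : point A) : Prop :=
  forall k : nat, exists N : nat, forall n : nat, (N <= n)%nat ->
    agree k (shift_inv_n n x) (shift_inv_n n x').

Definition right_closing {A B : Type} (Sigma : point A -> Prop)
    (phi : point A -> point B) : Prop :=
  forall x x', Sigma x -> Sigma x' -> left_asymptotic x x' ->
    eqp (phi x) (phi x') -> eqp x x'.

(* A code is a sliding block code, and a right closing code has a delay [M]: two points of
   [Sigma] that agree on [[t - M, t]] and whose images agree on [[t - M, t + M]] also agree at
   [t + 1].  Since every fibre has exactly [d] points, compactness shows that among any [d + 1]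
   points whose images agree on a long enough window around [t], two agree on [[t - W, t]].

   SFT: let every long block of [p] be a block of [Sigma].  The images of the local preimages
   glue to a point [z] of [Y].  Far to the left the [d] preimages of [z] are pairwise distinct
   on [[t - M, t]], so the local preimage at [t] coincides there with one of them, and right
   closing propagates this agreement with [p] to all of [[t - M, oo)].  Letting [t] go to
   [-oo] puts [p] in the closed set [Sigma].

   Nonwandering: near an occurrence of [u] in [x], approximate [phi x] by a periodic point [z]
   of the irreducible SFT [Y].  The preimages of [z] are periodic and pairwise distinct on every
   window of length [M], so [x] agrees around [u] with one of them, and a periodic point
   returns to [u]. *)

From Pilot Require Import Defs.
From Stdlib Require Import ZArith List Lia Classical ClassicalEpsilon Permutation.
Import ListNotations.
Open Scope Z_scope.

Set Implicit Arguments.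
Unset Strict Implicit.

Definition agree_on {A : Type} (x y : point A) (a b : Z) : Prop :=
  forall s, a <= s <= b -> x s = y s.

Definition shift_by {A : Type} (t : Z) (x : point A) : point A := fun i => x (i + t).

Lemma agree_on_weaken {A} (x y : point A) a b a' b' :
  agree_on x y a b -> a <= a' -> b' <= b -> agree_on x y a' b'.
Proof. intros H Ha Hb s Hs. apply H. lia. Qed.

Lemma agree_on_sym {A} (x y : point A) a b : agree_on x y a b -> agree_on y x a b.
Proof. intros H s Hs. symmetry. auto. Qed.

Lemma agree_on_shift_by {A} (x y : point A) t a b :
  agree_on (shift_by t x) (shift_by t y) a b <-> agree_on x y (a + t) (b + t).
Proof.
  unfold shift_by. split; intros H s Hs.
  - replace s with (s - t + t) by lia. apply H. lia.
  - apply H. lia.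
Qed.

Lemma agree_mono {A} (k k' : nat) (x y : point A) :
  (k <= k')%nat -> agree k' x y -> agree k x y.
Proof. intros Hk H i Hi. apply H. lia. Qed.

Lemma agree_trans {A} k (x y z : point A) : agree k x y -> agree k y z -> agree k x z.
Proof. intros H1 H2 i Hi. rewrite H1 by auto. auto. Qed.

Lemma closed_set_eqp {A} (X : point A -> Prop) x y :
  closed_set X -> X y -> eqp x y -> X x.
Proof. intros Hc Hy He. apply Hc. intros k. exists y. split; auto. intros i _; auto. Qed.

Lemma shift_space_shift_by {A} (X : point A -> Prop) t x :
  shift_space X -> X x -> X (shift_by t x).
Proof.
  intros [_ [Hcl [Hs Hsi]]]. revert x.
  induction t as [|t IH|t IH] using Z.peano_ind; intros x Hx.
  - apply (closed_set_eqp (y := x)); auto. intros i. unfold shift_by. f_equal; lia.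
  - apply (closed_set_eqp (y := Defs.shift (shift_by t x))); auto.
    intros i. unfold shift_by, Defs.shift. f_equal; lia.
  - apply (closed_set_eqp (y := shift_inv (shift_by t x))); auto.
    intros i. unfold shift_by, shift_inv. f_equal; lia.
Qed.

Lemma uniform_bound (K : nat) (P : nat -> nat -> Prop) :
  (forall j m m', (m <= m')%nat -> P j m -> P j m') ->
  (forall j, (j < K)%nat -> exists m, P j m) -> exists m, forall j, (j < K)%nat -> P j m.
Proof.
  intros Hmono. induction K as [|K IH]; intros H.
  - exists 0%nat. intros; lia.
  - destruct IH as [m1 Hm1]; [intros j Hj; apply H; lia|].
    destruct (H K ltac:(lia)) as [m2 Hm2].
    exists (Nat.max m1 m2). intros j Hj.
    destruct (Nat.eq_dec j K) as [->|Hne].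
    + apply Hmono with m2; [lia|auto].
    + apply Hmono with m1; [lia|apply Hm1; lia].
Qed.

Lemma infinitely_often_pigeonhole {C} (L : list C) (P : nat -> Prop) (f : nat -> C) :
  (forall N, exists n, (N <= n)%nat /\ P n) -> (forall n, P n -> In (f n) L) ->
  exists c, forall N, exists n, (N <= n)%nat /\ P n /\ f n = c.
Proof.
  revert P. induction L as [|a L IH]; intros P HP Hin.
  - destruct (HP 0%nat) as [n [_ Hn]]. destruct (Hin n Hn).
  - destruct (classic (forall N, exists n, (N <= n)%nat /\ P n /\ f n = a)) as [H|H].
    + exists a. exact H.
    + apply not_all_ex_not in H. destruct H as [N0 H].
      destruct (IH (fun n => P n /\ (N0 <= n)%nat /\ f n <> a)) as [c Hc].
      * intros N. destruct (HP (Nat.max N N0)) as [n [Hn1 Hn2]].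
        exists n. split; [lia|]. split; [exact Hn2|]. split; [lia|].
        intro E. apply H. exists n. repeat split; auto; lia.
      * intros n [Hn1 [_ Hn3]]. destruct (Hin n Hn1) as [E|E]; [congruence|exact E].
      * exists c. intros N. destruct (Hc N) as [n [Hn [[HPn _] Hfn]]]. eauto.
Qed.

Lemma window_induction (M : nat) (t : Z) (P : Z -> Prop) :
  (forall s, t - Z.of_nat M <= s <= t -> P s) ->
  (forall s, t <= s -> (forall i, s - Z.of_nat M <= i <= s -> P i) -> P (s + 1)) ->
  forall s, t - Z.of_nat M <= s -> P s.
Proof.
  intros H0 Hstep.
  assert (H : forall n : nat, forall s, t - Z.of_nat M <= s <= t + Z.of_nat n -> P s).
  { induction n as [|n IH]; intros s Hs.
    - apply H0. lia.
    - destruct (Z.eq_dec s (t + Z.of_nat (S n))) as [->|Hne]; [|apply IH; lia].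
      replace (t + Z.of_nat (S n)) with (t + Z.of_nat n + 1) by lia.
      apply Hstep; [lia|]. intros i Hi. apply IH. lia. }
  intros s Hs. apply (H (Z.to_nat (s - t))). lia.
Qed.

Definition periodic {A} (x : point A) (Q : nat) : Prop :=
  (0 < Q)%nat /\ forall s, x (s + Z.of_nat Q) = x s.

Lemma periodic_mul {A} (x : point A) Q n s : periodic x Q -> x (s + Z.of_nat (Q * n)) = x s.
Proof.
  intros [_ HQ]. induction n as [|n IH].
  - rewrite Nat.mul_0_r. f_equal. lia.
  - rewrite <- IH, <- (HQ (s + Z.of_nat (Q * n))). f_equal. nia.
Qed.

Lemma periodic_shift_by {A} (x : point A) Q t : periodic x Q -> periodic (shift_by t x) Q.
Proof.
  intros [HQ Hx]. split; auto. intros s. unfold shift_by.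
  rewrite <- (Hx (s + t)). f_equal. lia.
Qed.

Lemma periodic_of_shift_by_eqp {A} (x : point A) (a b : nat) :
  (a < b)%nat -> eqp (shift_by (Z.of_nat a) x) (shift_by (Z.of_nat b) x) -> periodic x (b - a).
Proof.
  intros Hab E. split; [lia|]. intros s. specialize (E (s - Z.of_nat a)). unfold shift_by in E.
  replace (s - Z.of_nat a + Z.of_nat a) with s in E by lia. rewrite E. f_equal. lia.
Qed.

Lemma periodic_eqp_of_eventually_eq {A} (x y : point A) Q Q' t0 :
  periodic x Q -> periodic y Q' -> (forall s, t0 <= s -> x s = y s) -> eqp x y.
Proof.
  intros HQ HQ' H s. set (c := Z.to_nat (t0 - s)).
  rewrite <- (periodic_mul (Q' * c) s HQ), <- (periodic_mul (Q * c) s HQ').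
  replace (Q' * (Q * c))%nat with (Q * (Q' * c))%nat by lia.
  assert (Hc : t0 - s <= Z.of_nat c) by (unfold c; lia). clearbody c.
  apply H. destruct HQ as [HQ _], HQ' as [HQ' _].
  assert (c <= Q * (Q' * c))%nat.
  { transitivity (Q' * c)%nat; apply Nat.le_mul_l; lia. }
  lia.
Qed.

(** * Compactness of full shifts *)

Definition cluster_window {C} (s : nat -> point C) (k : nat) (b : point C) : Prop :=
  forall N, exists n, (N <= n)%nat /\ agree k (s n) b.

Section ClusterPoint.
Variables (C : Type) (L : list C) (s : nat -> point C).
Hypothesis s_in_L : forall n i, In (s n i) L.

Lemma cluster_window_0 : exists b, cluster_window s 0 b.
Proof.
  destruct (infinitely_often_pigeonhole (L := L) (P := fun _ => True) (f := fun n => s n 0))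
    as [c Hc].
  - intros N. exists N. auto.
  - auto.
  - exists (fun _ => c). intros N. destruct (Hc N) as [n [Hn [_ Hsn]]].
    exists n. split; auto. intros i Hi. replace i with 0 by lia. exact Hsn.
Qed.

Lemma cluster_window_refine k b :
  cluster_window s k b -> exists b', cluster_window s (S k) b' /\ agree k b b'.
Proof.
  intros Hb.
  destruct (infinitely_often_pigeonhole (L := L) (P := fun n => agree k (s n) b)
              (f := fun n => s n (- Z.of_nat (S k)))) as [cl Hcl]; auto.
  destruct (infinitely_often_pigeonhole (L := L)
              (P := fun n => agree k (s n) b /\ s n (- Z.of_nat (S k)) = cl)
              (f := fun n => s n (Z.of_nat (S k)))) as [cr Hcr]; auto.
  exists (fun i => if Z.eq_dec i (- Z.of_nat (S k)) then cl
           else if Z.eq_dec i (Z.of_nat (S k)) then cr else b i).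
  split.
  - intros N. destruct (Hcr N) as [n [Hn [[Ha Hl] Hr]]]. exists n. split; auto.
    intros i Hi.
    destruct (Z.eq_dec i (- Z.of_nat (S k))); [subst; auto|].
    destruct (Z.eq_dec i (Z.of_nat (S k))); [subst; auto|].
    apply Ha. lia.
  - intros i Hi.
    destruct (Z.eq_dec i (- Z.of_nat (S k))); [lia|].
    destruct (Z.eq_dec i (Z.of_nat (S k))); [lia|reflexivity].
Qed.

(* Koenig's lemma: the successive refinements agree on growing windows, so they converge. *)
Lemma cluster_point : exists q, forall k, cluster_window s k q.
Proof.
  destruct cluster_window_0 as [b0 Hb0].
  destruct (choice (fun (kb : nat * point C) b' => cluster_window s (fst kb) (snd kb) ->
              cluster_window s (S (fst kb)) b' /\ agree (fst kb) (snd kb) b'))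
    as [next Hnext].
  { intros [k b]. destruct (classic (cluster_window s k b)) as [H|H].
    - destruct (cluster_window_refine H) as [b' Hb']. eauto.
    - exists b. simpl. tauto. }
  set (bs := fix go (k : nat) : point C := match k with O => b0 | S k' => next (k', go k') end).
  assert (Hbs : forall k, cluster_window s k (bs k)).
  { induction k as [|k IH]; [exact Hb0|]. exact (proj1 (Hnext (k, bs k) IH)). }
  assert (Hstep : forall k, agree k (bs k) (bs (S k))).
  { intros k. exact (proj2 (Hnext (k, bs k) (Hbs k))). }
  assert (Hchain : forall k j, agree k (bs k) (bs (k + j)%nat)).
  { intros k j. induction j as [|j IH].
    - rewrite Nat.add_0_r. intros i _. reflexivity.
    - rewrite Nat.add_succ_r. apply agree_trans with (bs (k + j)%nat); auto.
      apply agree_mono with (k + j)%nat; [lia|apply Hstep]. }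
  exists (fun i => bs (Z.to_nat (Z.abs i)) i). intros k N.
  destruct (Hbs k N) as [n [Hn Ha]]. exists n. split; auto.
  apply agree_trans with (bs k); auto. intros i Hi.
  replace k with (Z.to_nat (Z.abs i) + (k - Z.to_nat (Z.abs i)))%nat at 1 by lia.
  symmetry. apply Hchain. lia.
Qed.

End ClusterPoint.

Fixpoint words {C} (L : list C) (n : nat) : list (list C) :=
  match n with
  | O => [[]]
  | S n => flat_map (fun a => map (cons a) (words L n)) L
  end.

Lemma words_complete {C} (L : list C) n w :
  length w = n -> (forall a, In a w -> In a L) -> In w (words L n).
Proof.
  revert w. induction n as [|n IH]; intros w Hl Hin.
  - destruct w; [left; reflexivity|discriminate].
  - destruct w as [|a w]; [discriminate|]. simpl.
    apply in_flat_map. exists a. split; [apply Hin; left; auto|].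
    apply in_map. apply IH; [simpl in Hl; lia|]. intros b Hb. apply Hin. right; auto.
Qed.

Lemma nth_map_seq {C} (f : nat -> C) K j a : (j < K)%nat -> nth j (map f (seq 0 K)) a = f j.
Proof.
  intros Hj. rewrite (nth_indep _ a (f 0%nat)) by (rewrite length_map, length_seq; auto).
  rewrite map_nth, seq_nth; auto.
Qed.

Definition cluster_tuple {A} (K : nat) (xs : nat -> nat -> point A) (ys : nat -> point A) :=
  forall k N, exists n, (N <= n)%nat /\ forall j, (j < K)%nat -> agree k (xs n j) (ys j).

(* A tuple of points is encoded as a single point over the alphabet of K-letter words. *)
Lemma tuple_cluster {A} (X : point A -> Prop) K (xs : nat -> nat -> point A) :
  FiniteAlphabet A -> closed_set X -> (forall n j, (j < K)%nat -> X (xs n j)) ->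
  exists ys, (forall j, (j < K)%nat -> X (ys j)) /\ cluster_tuple K xs ys.
Proof.
  intros [la Hla] Hcl HX.
  set (s := fun n i => map (fun j => xs n j i) (seq 0 K)).
  destruct (cluster_point (L := words la K) (s := s)) as [q Hq].
  { intros n i. apply words_complete; [|intros; apply Hla].
    unfold s. rewrite length_map, length_seq. reflexivity. }
  set (ys := fun j i => nth j (q i) (xs 0%nat 0%nat 0)).
  assert (Hys : cluster_tuple K xs ys).
  { intros k N. destruct (Hq k N) as [n [Hn Ha]]. exists n. split; auto.
    intros j Hj i Hi. unfold ys. rewrite <- (Ha i Hi). unfold s. rewrite nth_map_seq; auto. }
  exists ys. split; auto.
  intros j Hj. apply Hcl. intros k. destruct (Hys k 0%nat) as [n [_ Hn]].
  exists (xs n j). split; auto. intros i Hi. symmetry. apply Hn; auto.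
Qed.

Lemma cluster_tuple_eq {A} K xs (ys : nat -> point A) j j' i :
  cluster_tuple K xs ys -> (j < K)%nat -> (j' < K)%nat ->
  (exists N, forall n, (N <= n)%nat -> xs n j i = xs n j' i) -> ys j i = ys j' i.
Proof.
  intros Hys Hj Hj' [N HN]. destruct (Hys (Z.to_nat (Z.abs i)) N) as [n [Hn Ha]].
  rewrite <- (Ha j Hj i), <- (Ha j' Hj' i) by lia. auto.
Qed.

(** * Shifts of finite type *)

Definition window {A} (x : point A) (a : Z) (n : nat) : list A :=
  map (fun j => x (a + Z.of_nat j)) (seq 0 n).

Lemma window_length {A} (x : point A) a n : length (window x a n) = n.
Proof. unfold window. rewrite length_map, length_seq. reflexivity. Qed.

Lemma nth_error_window {A} (x : point A) a n j :
  (j < n)%nat -> nth_error (window x a n) j = Some (x (a + Z.of_nat j)).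
Proof.
  intros Hj. unfold window. rewrite nth_error_map, nth_error_seq.
  destruct (Nat.ltb_spec j n); [reflexivity|lia].
Qed.

Lemma occurs_at_window {A} (x : point A) a n : occurs_at (window x a n) x a.
Proof.
  intros j c H. assert (Hj : (j < n)%nat).
  { rewrite <- (window_length x a n). apply nth_error_Some. congruence. }
  rewrite nth_error_window in H by auto. congruence.
Qed.

Lemma occurs_at_app {A} (u v : list A) x i :
  occurs_at u x i -> occurs_at v x (i + Z.of_nat (length u)) -> occurs_at (u ++ v) x i.
Proof.
  intros Hu Hv j c Hj. rewrite nth_error_app in Hj.
  destruct (Nat.ltb_spec j (length u)).
  - apply Hu; auto.
  - rewrite <- (Hv _ _ Hj). f_equal. lia.
Qed.

Definition locally_in {A} (X : point A -> Prop) (R : nat) (x : point A) : Prop :=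
  forall i, exists g, X g /\ agree_on g x (i - Z.of_nat R) (i + Z.of_nat R).

Lemma SFT_memory {A} (X : point A -> Prop) :
  SFT X -> exists L : nat, forall z, locally_in X L z -> X z.
Proof.
  intros [_ [F HF]]. exists (list_max (map (@length A) F)). intros z Hz.
  apply HF. intros w Hw i Hocc. destruct (Hz i) as [g [Hg Hgz]].
  apply (proj1 (HF g) Hg w Hw i). intros j a Hj. rewrite <- (Hocc j a Hj).
  assert (Hjw : (j < length w)%nat) by (apply nth_error_Some; congruence).
  assert (Hwl : (length w <= list_max (map (@length A) F))%nat).
  { pose proof (proj1 (list_max_le (map (@length A) F) _) (Nat.le_refl _)) as Hmax.
    rewrite Forall_forall in Hmax. apply Hmax, in_map, Hw. }
  apply Hgz. lia.
Qed.

Lemma SFT_of_memory {A} (X : point A -> Prop) (R : nat) :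
  shift_space X -> (forall z, locally_in X R z -> X z) -> SFT X.
Proof.
  intros HX Hmem. split; [exact HX|]. pose proof HX as [[la Hla] _].
  set (forbidden := fun w => if excluded_middle_informative (is_word X w) then false else true).
  exists (filter forbidden (words la (2 * R + 1))). intros x. split.
  - intros Hx w Hw i Hocc. apply filter_In in Hw as [_ Hw]. unfold forbidden in Hw.
    destruct (excluded_middle_informative (is_word X w)) as [_|Hnw]; [discriminate|].
    apply Hnw. exists x, i. auto.
  - intros Hx. apply Hmem. intros i.
    set (w := window x (i - Z.of_nat R) (2 * R + 1)).
    assert (Hw : is_word X w).
    { apply NNPP. intros Hnw. apply (Hx w) with (i - Z.of_nat R); [|apply occurs_at_window].
      apply filter_In. split.
      - apply words_complete; [apply window_length|intros; apply Hla].
      - unfold forbidden. destruct (excluded_middle_informative (is_word X w)); tauto. }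
    destruct Hw as [y [j [Hy Hocc]]].
    exists (shift_by (j - (i - Z.of_nat R)) y). split; [apply shift_space_shift_by; auto|].
    intros s Hs. unfold shift_by.
    rewrite <- (Hocc (Z.to_nat (s - (i - Z.of_nat R))) (x s)); [f_equal; lia|].
    unfold w. rewrite nth_error_window by lia. do 2 f_equal. lia.
Qed.

Definition repeat_block {A} (x : point A) (c : Z) (P : nat) : point A :=
  fun s => x (c + s mod Z.of_nat P).

Lemma repeat_block_periodic {A} (x : point A) c P : (0 < P)%nat -> periodic (repeat_block x c P) P.
Proof.
  intros HP. split; auto. intros s. unfold repeat_block.
  rewrite <- (Z.mul_1_l (Z.of_nat P)) at 1. rewrite Z_mod_plus_full. reflexivity.
Qed.

Lemma repeat_block_locally_in {A} (X : point A -> Prop) L x c P :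
  shift_space X -> X x -> (2 * L < P)%nat ->
  (forall q, 0 <= q <= 2 * Z.of_nat L -> x (c + Z.of_nat P + q) = x (c + q)) ->
  locally_in X L (repeat_block x c P).
Proof.
  intros HX Hx HP Hper i.
  set (r := (i - Z.of_nat L) mod Z.of_nat P).
  assert (Hr : 0 <= r < Z.of_nat P) by (apply Z.mod_pos_bound; lia).
  exists (shift_by (c + r - (i - Z.of_nat L)) x). split; [apply shift_space_shift_by; auto|].
  intros s Hs. unfold shift_by, repeat_block.
  assert (Hmod : s mod Z.of_nat P = (r + (s - (i - Z.of_nat L))) mod Z.of_nat P).
  { unfold r. rewrite Z.add_mod_idemp_l by lia. f_equal. lia. }
  rewrite Hmod. clearbody r.
  destruct (Z_lt_le_dec (r + (s - (i - Z.of_nat L))) (Z.of_nat P)).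
  - rewrite Z.mod_small by lia. f_equal. lia.
  - rewrite <- (Z.mod_add _ (-1)), Z.mod_small by lia.
    rewrite <- Hper by lia. f_equal. lia.
Qed.

Lemma SFT_irreducible_periodic_dense {A} (X : point A -> Prop) :
  SFT X -> irreducible X -> forall x a (n : nat), X x ->
  exists z P, X z /\ periodic z P /\ agree_on x z a (a + Z.of_nat n).
Proof.
  intros HX Hirr x a n Hx. destruct (SFT_memory HX) as [L HL].
  (* [v] covers [[a, a + n]] and is longer than [2 L], so that for a word [v w v] the infinite
     repetition of [v w] is locally in [X]. *)
  set (v := window x a (n + 2 * L + 1)).
  assert (Hv : is_word X v) by (exists x, a; split; [auto|apply occurs_at_window]).
  destruct (Hirr v v Hv Hv) as [w [y [c [Hy Hocc]]]].
  set (P := (length v + length w)%nat).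
  assert (Hlv : length v = (n + 2 * L + 1)%nat) by apply window_length.
  assert (Hfirst : forall q, 0 <= q < Z.of_nat (length v) -> y (c + q) = x (a + q)).
  { intros q Hq. rewrite <- (Hocc (Z.to_nat q)); [f_equal; lia|].
    rewrite nth_error_app1 by lia. unfold v. rewrite nth_error_window by lia.
    do 2 f_equal. lia. }
  assert (Hsecond : forall q, 0 <= q < Z.of_nat (length v) ->
                      y (c + Z.of_nat P + q) = x (a + q)).
  { intros q Hq. rewrite <- (Hocc (P + Z.to_nat q)%nat); [f_equal; lia|].
    rewrite app_assoc, nth_error_app2 by (rewrite length_app; lia).
    rewrite length_app.
    replace (P + Z.to_nat q - (length v + length w))%nat with (Z.to_nat q) by lia.
    unfold v. rewrite nth_error_window by lia. do 2 f_equal. lia. }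
  exists (shift_by (- a) (repeat_block y c P)), P. split; [|split].
  - apply shift_space_shift_by; [apply HX|]. apply HL, repeat_block_locally_in; auto.
    + apply HX.
    + lia.
    + intros q Hq. rewrite Hsecond, Hfirst by lia. reflexivity.
  - apply periodic_shift_by, repeat_block_periodic. lia.
  - intros s Hs. unfold shift_by, repeat_block. rewrite Z.mod_small by lia.
    rewrite Hfirst by lia. f_equal. lia.
Qed.

Lemma periodic_word_recurs {A} (X : point A -> Prop) x Q u i :
  X x -> periodic x Q -> occurs_at u x i -> exists w, is_word X (u ++ w ++ u).
Proof.
  intros Hx HQ Hu.
  exists (window x (i + Z.of_nat (length u)) (Q * length u - length u)), x, i.
  split; auto. apply occurs_at_app; auto. apply occurs_at_app; [apply occurs_at_window|].
  rewrite window_length. intros j a Hj.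
  assert (length u <= Q * length u)%nat by (apply Nat.le_mul_l; destruct HQ; lia).
  rewrite <- (Hu j a Hj), <- (periodic_mul (length u) (i + Z.of_nat j) HQ). f_equal. lia.
Qed.

(** * Codes *)

Section Code.
Variables (A B : Type) (Sigma : point A -> Prop) (Y : point B -> Prop) (phi : point A -> point B).
Hypothesis Sigma_shift_space : shift_space Sigma.
Hypothesis phi_code : code Sigma Y phi.

Lemma code_eqp x x' : Sigma x -> Sigma x' -> eqp x x' -> eqp (phi x) (phi x').
Proof.
  intros Hx Hx' He i. destruct phi_code as [_ [Hcont _]].
  destruct (Hcont x Hx (Z.to_nat (Z.abs i))) as [m Hm].
  apply (Hm x' Hx'); [intros j _; auto|lia].
Qed.

Lemma code_shift_by t x : Sigma x -> eqp (phi (shift_by t x)) (shift_by t (phi x)).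
Proof.
  pose proof Sigma_shift_space as [_ [_ [Hs _]]]. destruct phi_code as [_ [_ Hcomm]].
  revert x. induction t as [|t IH|t IH] using Z.peano_ind; intros x Hx i;
    assert (Ht : forall t, Sigma (shift_by t x)) by (intros; apply shift_space_shift_by; auto).
  - transitivity (phi x i); [|unfold shift_by; f_equal; lia].
    apply code_eqp; auto. intros j. unfold shift_by. f_equal. lia.
  - transitivity (phi (Defs.shift (shift_by t x)) i).
    + apply code_eqp; auto. intros j. unfold shift_by, Defs.shift. f_equal. lia.
    + rewrite Hcomm by auto. unfold Defs.shift. rewrite IH by auto.
      unfold shift_by. f_equal. lia.
  - set (u := shift_by (Z.pred t) x).
    transitivity (Defs.shift (phi u) (i - 1)); [unfold Defs.shift; f_equal; lia|].
    rewrite <- (Hcomm u (Ht _) (i - 1)).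
    rewrite (code_eqp (x' := shift_by t x)); auto.
    + rewrite IH by auto. unfold shift_by. f_equal. lia.
    + apply Hs, Ht.
    + intros j. unfold u, shift_by, Defs.shift. f_equal. lia.
Qed.

Lemma cluster_tuple_image K xs ys t N :
  cluster_tuple K xs ys -> (forall n j, (j < K)%nat -> Sigma (xs n j)) ->
  (forall j, (j < K)%nat -> Sigma (ys j)) ->
  exists n, (N <= n)%nat /\ forall j, (j < K)%nat -> phi (xs n j) t = phi (ys j) t.
Proof.
  intros Hcl Hxs Hys. destruct phi_code as [_ [Hcont _]].
  destruct (@uniform_bound K (fun j m => forall x, Sigma x -> agree m (ys j) x ->
                                          phi (ys j) t = phi x t)) as [m Hm].
  - intros j m m' Hmm H x Hx Ha. apply H; auto. apply agree_mono with m'; auto.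
  - intros j Hj. destruct (Hcont (ys j) (Hys j Hj) (Z.to_nat (Z.abs t))) as [m Hm].
    exists m. intros x Hx Ha. apply (Hm x Hx Ha). lia.
  - destruct (Hcl m N) as [n [Hn Ha]]. exists n. split; auto.
    intros j Hj. symmetry. apply Hm; auto. intros i Hi. symmetry. apply Ha; auto.
Qed.

Lemma cluster_tuple_image_eq K xs ys j j' t :
  cluster_tuple K xs ys -> (forall n j, (j < K)%nat -> Sigma (xs n j)) ->
  (forall j, (j < K)%nat -> Sigma (ys j)) -> (j < K)%nat -> (j' < K)%nat ->
  (exists N, forall n, (N <= n)%nat -> phi (xs n j) t = phi (xs n j') t) ->
  phi (ys j) t = phi (ys j') t.
Proof.
  intros Hcl Hxs Hys Hj Hj' [N HN].
  destruct (cluster_tuple_image t N Hcl Hxs Hys) as [n [Hn Hphi]].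
  rewrite <- (Hphi j Hj), <- (Hphi j' Hj'). auto.
Qed.

Definition block_window (m : nat) : Prop :=
  forall t x x', Sigma x -> Sigma x' ->
    agree_on x x' (t - Z.of_nat m) (t + Z.of_nat m) -> phi x t = phi x' t.

Lemma code_block_window : exists m, block_window m.
Proof.
  pose proof Sigma_shift_space as [Hfin [Hcl _]].
  enough (H0 : exists m : nat, forall x x', Sigma x -> Sigma x' ->
                 agree_on x x' (- Z.of_nat m) (Z.of_nat m) -> phi x 0 = phi x' 0).
  { destruct H0 as [m Hm]. exists m. intros t x x' Hx Hx' Ha.
    pose proof (Hm _ _ (shift_space_shift_by t Sigma_shift_space Hx)
                  (shift_space_shift_by t Sigma_shift_space Hx')) as H.
    rewrite !code_shift_by in H by auto. unfold shift_by at 1 3 in H.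
    rewrite !Z.add_0_l in H. apply H, agree_on_shift_by.
    apply (agree_on_weaken Ha); lia. }
  apply NNPP; intros Hn.
  destruct (choice (fun (m : nat) (p : point A * point A) =>
      Sigma (fst p) /\ Sigma (snd p) /\ agree_on (fst p) (snd p) (- Z.of_nat m) (Z.of_nat m) /\
      phi (fst p) 0 <> phi (snd p) 0)) as [f Hf].
  { intros m. apply NNPP; intro H. apply Hn. exists m. intros x x' Hx Hx' Ha.
    apply NNPP; intro He. apply H. exists (x, x'). simpl. auto. }
  set (xs := fun n j => match j with O => fst (f n) | _ => snd (f n) end).
  assert (Hxs : forall n j, (j < 2)%nat -> Sigma (xs n j)).
  { intros n [|j] _; apply Hf. }
  destruct (tuple_cluster Hfin Hcl Hxs) as [ys [Hys Hcl2]].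
  assert (E : eqp (phi (ys 0%nat)) (phi (ys 1%nat))).
  { apply code_eqp; auto. intros i. apply (cluster_tuple_eq Hcl2); auto.
    exists (Z.to_nat (Z.abs i)). intros n Hle. apply Hf. lia. }
  destruct (cluster_tuple_image 0 0 Hcl2 Hxs Hys) as [n [_ Hphi]].
  apply (Hf n). change (phi (xs n 0%nat) 0 = phi (xs n 1%nat) 0).
  rewrite !Hphi by auto. apply E.
Qed.

Definition has_delay (M : nat) : Prop :=
  forall t x x', Sigma x -> Sigma x' -> agree_on x x' (t - Z.of_nat M) t ->
    agree_on (phi x) (phi x') (t - Z.of_nat M) (t + Z.of_nat M) -> x (t + 1) = x' (t + 1).

Lemma right_closing_has_delay : right_closing Sigma phi -> exists M, has_delay M.
Proof.
  intros Hrc. pose proof Sigma_shift_space as [Hfin [Hcl _]].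
  enough (H0 : exists M : nat, forall x x', Sigma x -> Sigma x' ->
            agree_on x x' (- Z.of_nat M) 0 ->
            agree_on (phi x) (phi x') (- Z.of_nat M) (Z.of_nat M) -> x 1 = x' 1).
  { destruct H0 as [M HM]. exists M. intros t x x' Hx Hx' Ha Hb.
    pose proof (HM _ _ (shift_space_shift_by t Sigma_shift_space Hx)
                  (shift_space_shift_by t Sigma_shift_space Hx')) as H.
    unfold shift_by at 1 2 in H. rewrite Z.add_comm. apply H.
    - apply agree_on_shift_by. apply (agree_on_weaken Ha); lia.
    - intros s Hs. rewrite !code_shift_by by auto. unfold shift_by. apply Hb. lia. }
  apply NNPP; intros Hn.
  destruct (choice (fun (m : nat) (p : point A * point A) =>
      Sigma (fst p) /\ Sigma (snd p) /\ agree_on (fst p) (snd p) (- Z.of_nat m) 0 /\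
      agree_on (phi (fst p)) (phi (snd p)) (- Z.of_nat m) (Z.of_nat m) /\ fst p 1 <> snd p 1))
    as [f Hf].
  { intros m. apply NNPP; intro H. apply Hn. exists m. intros x x' Hx Hx' Ha Hb.
    apply NNPP; intro He. apply H. exists (x, x'). simpl. auto. }
  set (xs := fun n j => match j with O => fst (f n) | _ => snd (f n) end).
  assert (Hxs : forall n j, (j < 2)%nat -> Sigma (xs n j)).
  { intros n [|j] _; apply Hf. }
  destruct (tuple_cluster Hfin Hcl Hxs) as [ys [Hys Hcl2]].
  assert (E : eqp (ys 0%nat) (ys 1%nat)).
  { apply Hrc; auto.
    - intros k. exists k. intros n Hnk i Hi. unfold shift_inv_n.
      apply (cluster_tuple_eq Hcl2); auto.
      exists (Z.to_nat (Z.abs (i - Z.of_nat n))). intros m Hm. apply Hf. lia.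
    - intros t. apply (cluster_tuple_image_eq Hcl2 Hxs Hys); auto.
      exists (Z.to_nat (Z.abs t)). intros m Hm. apply Hf. lia. }
  destruct (Hcl2 1%nat 0%nat) as [n [_ Ha]].
  apply (Hf n). change (xs n 0%nat 1 = xs n 1%nat 1).
  rewrite (Ha 0%nat), (Ha 1%nat) by lia. apply E.
Qed.

Lemma has_delay_propagate M : has_delay M ->
  forall x x' t, Sigma x -> Sigma x' -> eqp (phi x) (phi x') ->
  agree_on x x' (t - Z.of_nat M) t -> forall s, t - Z.of_nat M <= s -> x s = x' s.
Proof.
  intros HM x x' t Hx Hx' He Ha. apply window_induction; auto.
  intros s _ Hs. apply HM; auto. intros i _. apply He.
Qed.

Section Fibers.
Variable d : nat.
Hypothesis fiber_card_d : forall y, Y y -> fiber_card Sigma phi y d.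

Definition enumerates_fiber (y : point B) (f : nat -> point A) : Prop :=
  (forall k, (k < d)%nat -> Sigma (f k) /\ eqp (phi (f k)) y) /\
  (forall k k', (k < d)%nat -> (k' < d)%nat -> eqp (f k) (f k') -> k = k').

Lemma fiber_enumeration y (x0 : point A) : Y y -> exists f, enumerates_fiber y f.
Proof.
  intros Hy. destruct (fiber_card_d Hy) as [fl [Hlen [Hin [_ Hdist]]]].
  exists (fun k => nth k fl x0). split.
  - intros k Hk. apply Hin, nth_In. lia.
  - intros k k' Hk Hk' E. apply (Hdist k k' (nth k fl x0) (nth k' fl x0)); auto;
      apply nth_error_nth'; lia.
Qed.

Lemma fiber_pigeonhole y (xs : nat -> point A) : Y y ->
  (forall j, (j <= d)%nat -> Sigma (xs j) /\ eqp (phi (xs j)) y) ->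
  exists j j', j <> j' /\ (j <= d)%nat /\ (j' <= d)%nat /\ eqp (xs j) (xs j').
Proof.
  intros Hy Hxs. destruct (fiber_card_d Hy) as [fl [Hlen [_ [Hcov _]]]].
  destruct (@Permutation_pigeonhole_rel _ _ (fun j x' => eqp (xs j) x') (seq 0 (S d)) fl)
    as [j [j' [l [Hperm [x' [_ [Hj Hj']]]]]]].
  - apply Forall_forall. intros j Hj. apply in_seq in Hj.
    destruct (Hxs j ltac:(lia)) as [Hx He]. destruct (Hcov _ Hx He) as [x' [Hin Heq]].
    apply Exists_exists. eauto.
  - rewrite length_seq. lia.
  - assert (Hnd : NoDup (j :: j' :: l)) by apply (Permutation_NoDup Hperm), seq_NoDup.
    assert (Hle : forall k, In k (j :: j' :: l) -> (k <= d)%nat).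
    { intros k Hk. apply (Permutation_in _ (Permutation_sym Hperm)), in_seq in Hk. lia. }
    exists j, j'. inversion_clear Hnd as [|? ? Hnin _]. repeat split.
    + intros ->. apply Hnin. left. reflexivity.
    + apply Hle. left. reflexivity.
    + apply Hle. right. left. reflexivity.
    + intros i. rewrite Hj, Hj'. reflexivity.
Qed.

Lemma uniform_fiber_pigeonhole (W : nat) : exists n0 : nat, forall xs : nat -> point A,
  (forall j, (j <= d)%nat -> Sigma (xs j)) ->
  (forall j j', (j <= d)%nat -> (j' <= d)%nat ->
     agree_on (phi (xs j)) (phi (xs j')) (- Z.of_nat n0) (Z.of_nat n0)) ->
  exists j j', j <> j' /\ (j <= d)%nat /\ (j' <= d)%nat /\
    agree_on (xs j) (xs j') (- Z.of_nat W) 0.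
Proof.
  pose proof Sigma_shift_space as [Hfin [Hcl _]]. destruct phi_code as [HY _].
  apply NNPP; intros Hn.
  destruct (choice (fun (n : nat) (xs : nat -> point A) =>
      (forall j, (j <= d)%nat -> Sigma (xs j)) /\
      (forall j j', (j <= d)%nat -> (j' <= d)%nat ->
         agree_on (phi (xs j)) (phi (xs j')) (- Z.of_nat n) (Z.of_nat n)) /\
      (forall j j', j <> j' -> (j <= d)%nat -> (j' <= d)%nat ->
         ~ agree_on (xs j) (xs j') (- Z.of_nat W) 0))) as [f Hf].
  { intros n. apply NNPP; intro H. apply Hn. exists n. intros xs Hxs Hphi.
    apply NNPP; intro Hc. apply H. exists xs. repeat split; auto.
    intros j j' Hjj Hj Hj' Ha. apply Hc. exists j, j'. auto. }
  assert (Hxs : forall n j, (j < S d)%nat -> Sigma (f n j)) by (intros n j Hj; apply Hf; lia).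
  destruct (tuple_cluster Hfin Hcl Hxs) as [ys [Hys Hcl2]].
  assert (Hfib : forall j, (j <= d)%nat -> Sigma (ys j) /\ eqp (phi (ys j)) (phi (ys 0%nat))).
  { intros j Hj. split; [apply Hys; lia|]. intros t.
    apply (cluster_tuple_image_eq Hcl2 Hxs Hys); try lia.
    exists (Z.to_nat (Z.abs t)). intros n Hle. apply Hf; lia. }
  destruct (fiber_pigeonhole (HY _ (Hys 0%nat ltac:(lia))) Hfib) as [j [j' [Hjj [Hj [Hj' E]]]]].
  destruct (Hcl2 W 0%nat) as [n [_ Ha]].
  apply (proj2 (proj2 (Hf n)) j j' Hjj Hj Hj'). intros i Hi.
  rewrite (Ha j ltac:(lia) i), (Ha j' ltac:(lia) i) by lia. apply E.
Qed.

(* Among [g] and the [d] points of the fibre, two agree on [t - W, t]; if the fibre points are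
   pairwise separated there, [g] must be one of the two. *)
Lemma fiber_tracking (W : nat) : exists n0 : nat, forall y f t g,
  (forall k, (k < d)%nat -> Sigma (f k) /\ eqp (phi (f k)) y) ->
  (forall k k', (k < d)%nat -> (k' < d)%nat -> k <> k' ->
     ~ agree_on (f k) (f k') (t - Z.of_nat W) t) ->
  Sigma g -> agree_on (phi g) y (t - Z.of_nat n0) (t + Z.of_nat n0) ->
  exists k, (k < d)%nat /\ agree_on g (f k) (t - Z.of_nat W) t.
Proof.
  destruct (uniform_fiber_pigeonhole W) as [n0 Hn0]. exists n0.
  intros y f t g Hf Hsep Hg Hgy.
  set (hs := fun j => match j with O => g | S k => f k end).
  assert (Hhs : forall j, (j <= d)%nat ->
                  Sigma (hs j) /\ agree_on (phi (hs j)) y (t - Z.of_nat n0) (t + Z.of_nat n0)).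
  { intros [|k] Hk; simpl; [auto|]. destruct (Hf k ltac:(lia)) as [Hk1 Hk2].
    split; auto. intros s _. apply Hk2. }
  destruct (Hn0 (fun j => shift_by t (hs j))) as [j [j' [Hjj [Hj [Hj' Ha]]]]].
  - intros j Hj. apply shift_space_shift_by; auto. apply Hhs; auto.
  - intros j j' Hj Hj' s Hs. rewrite !code_shift_by by (apply Hhs; auto). unfold shift_by.
    rewrite (proj2 (Hhs j Hj)), (proj2 (Hhs j' Hj')) by lia. reflexivity.
  - apply agree_on_shift_by in Ha.
    apply (agree_on_weaken (a' := t - Z.of_nat W) (b' := t)) in Ha; try lia.
    destruct j as [|k], j' as [|k']; [congruence| | |].
    + exists k'. split; [lia|exact Ha].
    + exists k. split; [lia|]. apply agree_on_sym, Ha.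
    + exfalso. apply (Hsep k k'); try lia. exact Ha.
Qed.

Lemma fiber_of_periodic_periodic z P x :
  Y z -> periodic z P -> Sigma x -> eqp (phi x) z -> exists Q, periodic x Q.
Proof.
  intros Hz HzP Hx Hxz.
  destruct (fiber_pigeonhole (xs := fun e => shift_by (Z.of_nat (P * e)) x) Hz)
    as [e [e' [Hee [_ [_ E]]]]].
  { intros e _. split; [apply shift_space_shift_by; auto|]. intros s.
    rewrite code_shift_by by auto. unfold shift_by. rewrite Hxz. apply periodic_mul; auto. }
  destruct HzP as [HP _].
  destruct (proj1 (Nat.lt_gt_cases e e') Hee) as [Hlt|Hlt].
  - exists (P * e' - P * e)%nat. apply periodic_of_shift_by_eqp; [nia|exact E].
  - exists (P * e - P * e')%nat. apply periodic_of_shift_by_eqp; [nia|].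
    intros s. symmetry. apply E.
Qed.

Section Delay.
Variable M : nat.
Hypothesis phi_delay : has_delay M.

Lemma fiber_eventually_separated y f : enumerates_fiber y f ->
  exists t0, forall t, t <= t0 -> forall k k', (k < d)%nat -> (k' < d)%nat -> k <> k' ->
    ~ agree_on (f k) (f k') (t - Z.of_nat M) t.
Proof.
  intros [Hf Hinj].
  destruct (@uniform_bound d (fun k N => forall k', (k' < d)%nat -> k <> k' ->
              exists q, - Z.of_nat N <= q /\ f k q <> f k' q)) as [N HN].
  - intros k N N' HN H k' Hk' Hne. destruct (H k' Hk' Hne) as [q Hq].
    exists q. split; [lia|apply Hq].
  - intros k Hk.
    apply (@uniform_bound d (fun k' N => k <> k' ->
                               exists q, - Z.of_nat N <= q /\ f k q <> f k' q)).
    + intros k' N N' HN H Hne. destruct (H Hne) as [q Hq]. exists q. split; [lia|apply Hq].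
    + intros k' Hk'. destruct (Nat.eq_dec k k') as [E|Hne]; [exists 0%nat; contradiction|].
      assert (Hneq : ~ eqp (f k) (f k')) by (intro E; apply Hne, Hinj; auto).
      apply not_all_ex_not in Hneq as [q Hq].
      exists (Z.to_nat (- q)). intros _. exists q. split; [lia|auto].
  - exists (- Z.of_nat N). intros t Ht k k' Hk Hk' Hne Ha.
    destruct (HN k Hk k' Hk' Hne) as [q [Hq Hfq]]. apply Hfq.
    destruct (Hf k Hk) as [Sk Ek], (Hf k' Hk') as [Sk' Ek'].
    apply (has_delay_propagate (t := t) phi_delay Sk Sk'); auto; [|lia].
    intros i. rewrite Ek, Ek'. reflexivity.
Qed.

Lemma periodic_fiber_separated z P f t : Y z -> periodic z P -> enumerates_fiber z f ->
  forall k k', (k < d)%nat -> (k' < d)%nat -> k <> k' ->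
    ~ agree_on (f k) (f k') (t - Z.of_nat M) t.
Proof.
  intros Hz HzP [Hf Hinj] k k' Hk Hk' Hne Ha. apply Hne, Hinj; auto.
  destruct (Hf k Hk) as [Sk Ek], (Hf k' Hk') as [Sk' Ek'].
  destruct (fiber_of_periodic_periodic Hz HzP Sk Ek) as [Q HQ].
  destruct (fiber_of_periodic_periodic Hz HzP Sk' Ek') as [Q' HQ'].
  apply (periodic_eqp_of_eventually_eq HQ HQ' (t0 := t - Z.of_nat M)).
  apply (has_delay_propagate phi_delay Sk Sk'); auto.
  intros i. rewrite Ek, Ek'. reflexivity.
Qed.

Lemma Sigma_memory : SFT Y -> exists R, forall p, locally_in Sigma R p -> Sigma p.
Proof.
  intros HY. destruct (SFT_memory HY) as [L HL].
  destruct code_block_window as [m Hm]. destruct (fiber_tracking M) as [n0 Hn0].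
  exists (n0 + M + m + L + 1)%nat. intros p Hp.
  destruct (choice _ Hp) as [gs Hgs].
  set (z := fun i => phi (gs i) i).
  assert (Hlocal : forall g t, Sigma g -> agree_on g p (t - Z.of_nat m) (t + Z.of_nat m) ->
                     phi g t = z t).
  { intros g t Hg Ha. apply Hm; [auto|apply Hgs|].
    intros s Hs. rewrite Ha by lia. symmetry. apply Hgs. lia. }
  assert (Hz : Y z).
  { apply HL. intros i. exists (phi (gs i)). split; [apply phi_code, Hgs|].
    intros s Hs. apply Hlocal; [apply Hgs|]. apply (agree_on_weaken (proj2 (Hgs i))); lia. }
  destruct (fiber_enumeration p Hz) as [f Hf].
  destruct (fiber_eventually_separated Hf) as [t0 Ht0].
  assert (Hfollow : forall t, t <= t0 ->
            exists k, (k < d)%nat /\ forall s, t - Z.of_nat M <= s -> f k s = p s).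
  { intros t Ht.
    destruct (Hn0 z f t (gs t) (proj1 Hf) (Ht0 t Ht) (proj1 (Hgs t))) as [k [Hk Hgk]].
    { intros s Hs. apply Hlocal; [apply Hgs|]. apply (agree_on_weaken (proj2 (Hgs t))); lia. }
    exists k. split; auto. destruct (proj1 Hf k Hk) as [Sk Ek].
    apply window_induction.
    - intros s Hs. rewrite <- Hgk by lia. apply Hgs. lia.
    - intros s Hs IH. destruct (Hgs s) as [Hg Hga]. rewrite <- (Hga (s + 1)) by lia.
      apply phi_delay; auto.
      + intros i Hi. rewrite IH by lia. symmetry. apply Hga. lia.
      + intros i Hi. rewrite Ek. symmetry. apply Hlocal; auto.
        apply (agree_on_weaken Hga); lia. }
  apply (proj1 (proj2 Sigma_shift_space)). intros k.
  destruct (Hfollow (Z.min t0 (- Z.of_nat k)) ltac:(lia)) as [j [Hj Hfj]].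
  exists (f j). split; [apply Hf; auto|]. intros i Hi. symmetry. apply Hfj. lia.
Qed.

Lemma Sigma_nonwandering : SFT Y -> irreducible Y -> nonwandering Sigma.
Proof.
  intros HY Hirr u [x [i0 [Hx Hu]]].
  set (W := Nat.max M (length u)). destruct (fiber_tracking W) as [n0 Hn0].
  set (t := i0 + Z.of_nat (length u) - 1).
  destruct (SFT_irreducible_periodic_dense HY Hirr (t - Z.of_nat n0) (2 * n0)
              (proj1 phi_code x Hx)) as [z [P [Hz [HzP Hxz]]]].
  destruct (fiber_enumeration x Hz) as [f Hf].
  destruct (Hn0 z f t x (proj1 Hf)) as [k [Hk Hxk]]; auto.
  - intros k k' Hk Hk' Hne Ha. apply (periodic_fiber_separated (t := t) Hz HzP Hf Hk Hk' Hne).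
    apply (agree_on_weaken Ha); lia.
  - apply (agree_on_weaken Hxz); lia.
  - destruct (proj1 Hf k Hk) as [Sk Ek].
    destruct (fiber_of_periodic_periodic Hz HzP Sk Ek) as [Q HQ].
    apply (periodic_word_recurs Sk HQ (i := i0)). intros j a Hj.
    assert (j < length u)%nat by (apply nth_error_Some; congruence).
    rewrite <- (Hu j a Hj). symmetry. apply Hxk. lia.
Qed.

End Delay.
End Fibers.
End Code.

Theorem proposition3p5 (A B : Type) (Sigma : point A -> Prop) (Y : point B -> Prop)
    (phi : point A -> point B) :
  shift_space Sigma -> SFT Y -> irreducible Y ->
  code Sigma Y phi -> right_closing Sigma phi -> constant_to_one Sigma Y phi ->
  SFT Sigma /\ nonwandering Sigma.
Proof.
  intros HS HY Hirr Hcode Hrc [d Hd].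
  destruct (right_closing_has_delay HS Hcode Hrc) as [M HM].
  destruct (Sigma_memory HS Hcode Hd HM HY) as [R HR].
  split.
  - exact (SFT_of_memory HS HR).
  - exact (Sigma_nonwandering HS Hcode Hd HM HY Hirr).
Qed.
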